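(* Let $d=(d_1,\ldots,d_n)$ be a degree sequence with $n\ge 4$, and let $m=\frac12\sum_i d_i$. There is a realization of $d$ as a bridge-less bipartite cactus if and only if $m\le 2\left\lfloor\frac{2(n-1)}{3}\right\rfloor$, $m$ is even, and $d_i$ is even for every $i$.
   Context: A degree sequence is a sequence $d=(d_1,\ldots,d_n)$ of integers with $d_i\in\{1,\ldots,n-1\}$, even sum, and $d_1\ge\cdots\ge d_n$. A realization of $d$ is a simple graph on $\{1,\ldots,n\}$ in which vertex $i$ has degree $d_i$. A cactus is a connected simple graph in which every edge lies on at most one cycle; it is bridge-less if no edge's removal disconnects it. *)

From mathcomp Require Import all_boot.
Set Implicit Arguments. Unset Strict Implicit. Unset Printing Implicit Defensive.

Section Graphs.
Variable T : finType.

Definition simple_graph (e : rel T) : Prop :=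
  symmetric e /\ irreflexive e.

Definition deg (e : rel T) (x : T) : nat := #|[set y | e x y]|.

Definition connected_graph (e : rel T) : Prop :=
  forall x y : T, connect e x y.

Definition is_cycle (e : rel T) (p : seq T) : Prop :=
  [/\ uniq p, 3 <= size p & cycle e p].

(* the edge set of the cycle p, as ordered pairs (both orientations) *)
Definition cycle_edges (p : seq T) : {set T * T} :=
  [set uv | (uv.1 \in p) && (uv.2 \in p) &&
            ((next p uv.1 == uv.2) || (next p uv.2 == uv.1))].

(* every edge lies on at most one cycle (cycles compared as edge sets) *)
Definition is_cactus (e : rel T) : Prop :=
  connected_graph e /\
  forall (u v : T) (p q : seq T), e u v ->
    is_cycle e p -> is_cycle e q ->
    (u, v) \in cycle_edges p -> (u, v) \in cycle_edges q ->
    cycle_edges p = cycle_edges q.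

Definition remove_edge (e : rel T) (u v : T) : rel T :=
  fun x y => e x y && ~~ (((x == u) && (y == v)) || ((x == v) && (y == u))).

Definition bridgeless (e : rel T) : Prop :=
  forall u v : T, e u v -> connected_graph (remove_edge e u v).

Definition bipartite (e : rel T) : Prop :=
  exists f : T -> bool, forall x y : T, e x y -> f x != f y.

End Graphs.

(* degree sequence d_1 >= ... >= d_n, indexed by 'I_n (vertex i+1 is ordinal i) *)
Definition degree_sequence (n : nat) (d : 'I_n -> nat) : Prop :=
  [/\ forall i, 1 <= d i <= n - 1,
      ~~ odd (\sum_(i < n) d i)
    & forall i j : 'I_n, i <= j -> d j <= d i].

Definition realization (n : nat) (d : 'I_n -> nat) (e : rel 'I_n) : Prop :=
  simple_graph e /\ forall i, deg e i = d i.

From mathcomp Require Import all_boot zify.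
From Stdlib Require Import ClassicalEpsilon.
Set Implicit Arguments. Unset Strict Implicit. Unset Printing Implicit Defensive.

(* Since e is bridgeless, every edge lies on a cycle, and the cactus
   condition makes that cycle unique; so the neighbours of a vertex come in
   pairs, one pair per cycle through it, and all degrees are even. In a
   bipartite graph the degree sum is twice the degree sum over one colour class,
   so with even degrees the number m of edges is even. Bipartite cycles have
   length at least 4 and the cycles of a cactus are edge-disjoint, so there are
   at most m/4 of them; deleting one edge from each leaves a forest, whence
   m - m/4 <= n - 1, which for even m is m <= 2 floor(2(n-1)/3). Write d = 2s and induct on the sum of s. If some vertex a has
   s a > 1, the bound provides three vertices of weight 1: realise the other
   vertices with s a lowered by one, then glue a 4-cycle through a and these
   three. If all weights are 1, n is even and one Hamiltonian cycle works.
   Gluing an even cycle at a single vertex keeps the graph a connected bipartite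
   cactus with every edge on a cycle. *)

Lemma sum_even (I : finType) (F : I -> nat) :
  (forall i, ~~ odd (F i)) -> ~~ odd (\sum_i F i).
Proof. by move=> ev; elim/big_ind: _ => // x y; rewrite oddD => /negbTE-> /negbTE->. Qed.

Lemma half_sum_even (I : finType) (F : I -> nat) :
  (forall i, ~~ odd (F i)) -> (\sum_i F i)./2 = \sum_i (F i)./2.
Proof.
move=> ev; rewrite (eq_bigr (fun i => 2 * (F i)./2)) => [|i _].
  by rewrite -big_distrr /= mul2n doubleK.
by have := odd_double_half (F i); rewrite (negbTE (ev i)) -mul2n.
Qed.

(** * Edge sets of cycles *)

Section CycleEdges.
Variable T : finType.
Implicit Types (c p : seq T) (u v x y : T).

Lemma next_head x r : next (x :: r) x = head x r.
Proof. by case: r => [|y r] /=; rewrite eqxx. Qed.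

Lemma prev_head x r : uniq (x :: r) -> prev (x :: r) x = last x r.
Proof.
case/andP=> xr _; rewrite prev_nth mem_head /=.
have -> : index x r = size r by apply/eqP; rewrite eqn_leq index_size leqNgt index_mem.
by rewrite -[size r]/((size (x :: r)).-1) nth_last.
Qed.

Lemma rot_to_head c x : uniq c -> x \in c -> exists r,
  [/\ uniq (x :: r), size (x :: r) = size c, next c =1 next (x :: r)
    & prev c =1 prev (x :: r)].
Proof.
move=> uc /rot_to[i r Hr]; exists r; rewrite -Hr rot_uniq size_rot.
by split=> // y; rewrite (next_rot, prev_rot).
Qed.

Lemma next_neq c x : uniq c -> 1 < size c -> x \in c -> next c x != x.
Proof.
move=> uc sc /(rot_to_head uc)[[|y r] [/andP[xr _] sr -> _]]; first by rewrite -sr in sc.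
by rewrite next_head; apply: contraNneq xr => <-; rewrite mem_head.
Qed.

Lemma next_neq_prev c x : uniq c -> 2 < size c -> x \in c -> next c x != prev c x.
Proof.
move=> uc sc /(rot_to_head uc)[r [ur sr -> ->]].
rewrite next_head prev_head //; rewrite -sr in sc; clear sr.
case: r ur sc => [|y [|z r]] // /andP[_ /andP[yr _]] _.
by apply: contraNneq yr => /= ->; apply: mem_last.
Qed.

Lemma index_next c z : uniq c -> z \in c -> index (next c z) c = (index z c).+1 %% size c.
Proof.
case: c => [|y p] // up zc; rewrite next_nth zc.
have : index z (y :: p) <= size p by rewrite -ltnS index_mem.
rewrite leq_eqVlt => /orP[/eqP iz|lt_iz].
  by rewrite iz nth_default //= eqxx modnn.
rewrite modn_small // -[nth y p _]/(nth y (y :: p) (index z (y :: p)).+1).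
by rewrite index_uniq.
Qed.

Lemma path_invariant (r : rel T) (A : pred T) x s : path r x s ->
  {in x :: s &, forall y z, r y z -> A y = A z} -> {in x :: s, forall z, A z = A x}.
Proof.
elim: s x => [|y s IH] x /=; first by move=> _ _ z; rewrite inE => /eqP->.
case/andP=> rxy pys hA z; rewrite inE => /predU1P[-> //|zys].
have -> : A x = A y by apply: hA; rewrite ?mem_head ?inE ?eqxx ?orbT.
by apply: IH zys => // u w uys wys; apply: hA; rewrite inE ?uys ?wys orbT.
Qed.

Lemma mem_cycle_edges c u v : uniq c ->
  ((u, v) \in cycle_edges c) = (u \in c) && ((v == next c u) || (v == prev c u)).
Proof.
move=> uc; rewrite inE /=; case uin: (u \in c) => //=.
apply/idP/idP.
- by case/andP=> _ /orP[/eqP<-|/eqP<-]; rewrite ?eqxx // prev_next // eqxx orbT.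
- case/orP=> /eqP->; first by rewrite mem_next uin eqxx.
  by rewrite mem_prev uin next_prev // eqxx orbT.
Qed.

Lemma cycle_edges_sym c u v : ((u, v) \in cycle_edges c) = ((v, u) \in cycle_edges c).
Proof. by rewrite !inE /= (andbC (v \in c)) orbC. Qed.

Lemma cycle_edges_vertices c u v : (u, v) \in cycle_edges c -> (u \in c) && (v \in c).
Proof. by rewrite inE /= => /andP[]. Qed.

Lemma cycle_edges_irr c u : uniq c -> 1 < size c -> (u, u) \notin cycle_edges c.
Proof.
move=> uc sc; rewrite inE /= orbb; apply/negP => /andP[/andP[uin _] /eqP h].
by move: (next_neq uc sc uin); rewrite h eqxx.
Qed.

Lemma cycle_edges_edge (e : rel T) c u v : symmetric e -> cycle e c ->
  (u, v) \in cycle_edges c -> e u v.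
Proof.
move=> se ce; rewrite inE /= => /andP[/andP[uin vin] /orP[/eqP<-|/eqP<-]].
- exact: next_cycle.
- by rewrite se; apply: next_cycle.
Qed.

Lemma cycle_cycle_edges c : uniq c -> cycle (fun x y => (x, y) \in cycle_edges c) c.
Proof.
move=> uc; apply: cycle_from_next => // x xin.
by rewrite inE /= xin mem_next xin eqxx.
Qed.

Lemma card_cycle_nbrs c u : uniq c -> 2 < size c ->
  #|[set y | (u, y) \in cycle_edges c]| = if u \in c then 2 else 0.
Proof.
move=> uc sc; case uin: (u \in c).
- have -> : [set y | (u, y) \in cycle_edges c] = [set next c u; prev c u].
    by apply/setP=> y; rewrite in_set mem_cycle_edges // uin !inE.
  by rewrite cards2 next_neq_prev.
- apply/eqP; rewrite cards_eq0; apply/eqP/setP=> y.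
  by rewrite in_set mem_cycle_edges // uin inE.
Qed.

Lemma card_pairs (A : {set T * T}) : #|A| = \sum_u #|[set y | (u, y) \in A]|.
Proof.
rewrite -sum1_card big_mkcond /=.
rewrite (eq_bigr (fun u => \sum_y (if (u, y) \in A then 1 else 0))).
  by rewrite pair_big /=; apply: eq_bigr => [[u y]].
by move=> u _; rewrite -sum1_card big_mkcond; apply: eq_bigr => y _; rewrite inE.
Qed.

Lemma card_cycle_edges c : uniq c -> 2 < size c -> #|cycle_edges c| = 2 * size c.
Proof.
move=> uc sc; rewrite card_pairs (eq_bigr _ (fun u _ => card_cycle_nbrs u uc sc)).
by rewrite -big_mkcond /= sum_nat_const (card_uniqP uc) mulnC.
Qed.

Lemma eq_set2 (a b x y : T) : a != b -> a \in [set x; y] -> b \in [set x; y] ->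
  [set a; b] = [set x; y].
Proof.
move=> ab ax bx; apply/eqP; rewrite eqEcard subUset !sub1set ax bx !cards2 (negbTE ab).
by case: (_ != _).
Qed.

Lemma cycle_edges_sub_eq c p : uniq c -> 2 < size c -> uniq p -> 2 < size p ->
  {subset cycle_edges c <= cycle_edges p} -> cycle_edges p = cycle_edges c.
Proof.
move=> uc sc up sp cp_sub.
have nbrs w : w \in c ->
    w \in p /\ [set next p w; prev p w] = [set next c w; prev c w].
  move=> wc; have /cp_sub : (w, next c w) \in cycle_edges c.
    by rewrite mem_cycle_edges // wc eqxx.
  have /cp_sub : (w, prev c w) \in cycle_edges c.
    by rewrite mem_cycle_edges // wc eqxx orbT.
  rewrite !mem_cycle_edges // => /andP[wp hp] /andP[_ hn]; split=> //.
  by apply/esym/eq_set2; rewrite ?next_neq_prev // !inE.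
have nbrs_in w z : w \in c -> z \in [set next p w; prev p w] -> z \in c.
  by move=> wc; rewrite (nbrs w wc).2 !inE => /orP[] /eqP->; rewrite ?mem_next ?mem_prev.
have pc : {subset p <= c}.
  case: p up sp cp_sub nbrs nbrs_in => [|x0 p'] // up _ _ nbrs nbrs_in.
  have inv := path_invariant (A := fun z => z \in c) (cycle_next up).
  have {}inv : {in x0 :: p', forall z, (z \in c) = (x0 \in c)}.
    move=> z zp; apply: inv; last by rewrite -rcons_cons mem_rcons inE zp orbT.
    move=> y w _ _ /eqP <-; apply/idP/idP => [yc|nc].
      by apply: nbrs_in yc _; rewrite !inE eqxx.
    by apply: (nbrs_in _ _ nc); rewrite prev_next // !inE eqxx orbT.
  have [w0 w0c] : exists w0, w0 \in c.
    by case: (c) sc => [|w0 ?] //; exists w0; rewrite mem_head.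
  by move=> z zp; rewrite inv // -(inv w0) // (nbrs w0 w0c).1.
apply/setP=> [[u v]]; rewrite !mem_cycle_edges //.
case: (boolP (u \in c)) => [uc'|ucN].
  by have [-> h] := nbrs u uc'; move: h; rewrite -!in_set2 => ->.
by case: (boolP (u \in p)) => // /pc; rewrite (negbTE ucN).
Qed.
End CycleEdges.

Section Graphs.
Variable T : finType.
Implicit Types (e : rel T) (p q : seq T) (u v x y : T).

Lemma connect_remove_edge_cycle e u v : symmetric e -> irreflexive e -> e u v ->
  connect (remove_edge e u v) u v ->
  exists p, is_cycle e p /\ (u, v) \in cycle_edges p.
Proof.
move=> se ie euv /connectP[q hq hv].
case: (shortenP hq) hv => q' hq' uq' _ hv.
have sub_e : subrel (remove_edge e u v) e by move=> a b /andP[].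
have sq : 2 <= size q'.
  case: q' hq' uq' hv => [|w [|w' r]] //= hq' uq' hv.
  - by move: euv; rewrite hv ie.
  - by move: hq'; rewrite /= andbT /remove_edge -hv !eqxx /= andbF.
exists (u :: q'); split; first split=> //.
- by rewrite /cycle rcons_path (sub_path sub_e hq') /= -hv se.
- by rewrite mem_cycle_edges // mem_head prev_head // -hv eqxx orbT.
Qed.

Lemma remove_edge_sym e u v : symmetric e -> symmetric (remove_edge e u v).
Proof.
move=> se a b; rewrite /remove_edge se; congr (_ && ~~ _).
by case: (a == u); case: (b == v); case: (a == v); case: (b == u).
Qed.

Lemma remove_edgeC e u v : remove_edge e u v =2 remove_edge e v u.
Proof. by move=> a b; rewrite /remove_edge orbC. Qed.

Lemma connect_remove_cycle_edge e p x : uniq p -> 2 < size p -> cycle e p ->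
  x \in p -> connect (remove_edge e x (next p x)) (next p x) x.
Proof.
move=> up sp cp xp; set y := next p x.
have /rot_to[i r hr] : y \in p by rewrite mem_next.
have ur : uniq (y :: r) by rewrite -hr rot_uniq.
have cr : cycle e (y :: r) by rewrite -hr rot_cycle.
have sr : 2 < size (y :: r) by rewrite -hr size_rot.
have hl : last y r = x by rewrite -prev_head // -hr prev_rot // prev_next.
case/lastP: r ur cr sr hl {hr} => [|r1 z] // ur cr sr; rewrite last_rcons => hz; subst z.
move: cr; rewrite /cycle !rcons_path => /andP[/andP[hp1 hlast] _].
move: ur; rewrite -rcons_cons rcons_uniq => /andP[xn /andP[yr1 _]].
have hw : last y r1 \in r1 by case: (r1) sr => [|w s] //= _; rewrite mem_last.
apply/connectP; exists (rcons r1 x); last by rewrite last_rcons.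
rewrite rcons_path; apply/andP; split.
- apply: (sub_in_path (P := fun z => z != x) (e := e)) hp1.
  + by move=> a b ha hb eab; rewrite /remove_edge eab (negbTE ha) (negbTE hb) andbF.
  + by apply/allP => z zin; apply: contraNneq xn => <-.
- have lx : last y r1 != x by apply: contraNneq xn => <-; rewrite inE hw orbT.
  have ly : last y r1 != y by apply: contraNneq yr1 => <-.
  by rewrite /remove_edge hlast (negbTE lx) (negbTE ly).
Qed.

Definition remove_edges e (R : {set T * T}) : rel T :=
  fun x y => [&& e x y, (x, y) \notin R & (y, x) \notin R].

Lemma remove_edges_sym e R : symmetric e -> symmetric (remove_edges e R).
Proof. by move=> se x y; rewrite /remove_edges se; congr (_ && _); rewrite andbC. Qed.

Lemma remove_edges_irr e R : irreflexive e -> irreflexive (remove_edges e R).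
Proof. by move=> ie x; rewrite /remove_edges ie. Qed.

Lemma bridgeless_of_cycles e : symmetric e -> connected_graph e ->
  (forall u v, e u v -> exists p, is_cycle e p /\ (u, v) \in cycle_edges p) ->
  bridgeless e.
Proof.
move=> se conn on_cycle u v /on_cycle[p [[up sp cp] huv]].
have sym_uv := sym_connect_sym (remove_edge_sym u v se).
have conn_uv : connect (remove_edge e u v) u v.
  move: huv; rewrite inE /= => /andP[/andP[up' vp] /orP[] /eqP hv].
  - by rewrite sym_uv -hv; apply: connect_remove_cycle_edge.
  - by rewrite (eq_connect (remove_edgeC e u v)) -hv; apply: connect_remove_cycle_edge.
move=> x y; apply: connect_sub (conn x y) => a b eab.
case: (boolP ((a == u) && (b == v) || (a == v) && (b == u))).
- by case/orP => /andP[/eqP-> /eqP->]; rewrite // sym_uv.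
- by move=> nuv; apply: connect1; rewrite /remove_edge eab nuv.
Qed.

Definition other (N : {set T}) y := odflt y [pick z in N :\ y].

Lemma other_set2 y z : y != z -> other [set y; z] y = z.
Proof. by move=> yz; rewrite /other setU1K ?inE // pick_set1. Qed.

Lemma other_card2 (N : {set T}) y : #|N| = 2 -> y \in N ->
  N = [set y; other N y] /\ other N y != y.
Proof.
move=> N2 yN; have /cards1P[z Nyz] : #|N :\ y| == 1.
  by move: N2; rewrite (cardsD1 y) yN add1n => -[->].
have zy : z != y by have := set11 z; rewrite -Nyz !inE => /andP[].
by rewrite /other Nyz pick_set1 -Nyz setD1K.
Qed.

Definition edge_set e := [set uv : T * T | e uv.1 uv.2].

Lemma card_edge_set e : #|edge_set e| = \sum_u deg e u.
Proof. by rewrite card_pairs; apply: eq_bigr => u _; apply: eq_card => y; rewrite !inE. Qed.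

Lemma deg_sum e u : deg e u = \sum_y e u y.
Proof.
by rewrite /deg -sum1_card big_mkcond; apply: eq_bigr => y _; rewrite inE; case: (e u y).
Qed.

Lemma bipartite_sum_deg e (f : T -> bool) : symmetric e ->
  (forall x y, e x y -> f x != f y) -> \sum_u deg e u = 2 * \sum_(u | f u) deg e u.
Proof.
move=> se hf; rewrite (bigID f) /= mul2n -addnn; congr (_ + _).
rewrite !(eq_bigr _ (fun u _ => deg_sum e u)) exchange_big [RHS]big_mkcond /=.
apply: eq_bigr => y _; case: ifP => fy.
- rewrite [RHS](bigID (fun u => ~~ f u)) /= [X in _ = _ + X]big1 ?addn0.
    by apply: eq_bigr => u _; rewrite se.
  by move=> u; rewrite negbK => fu; apply/eqP; rewrite eqb0; apply: contraL fu => /hf; rewrite fy.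
- apply: big1 => u fu; apply/eqP; rewrite eqb0; apply: contra fu => /hf.
  by rewrite fy; case: (f u).
Qed.

Lemma bipartite_half_sum_deg_even e : symmetric e -> bipartite e ->
  (forall v, ~~ odd (deg e v)) -> ~~ odd (\sum_u deg e u)./2.
Proof.
move=> se [f hf] even_deg; rewrite (bipartite_sum_deg se hf) mul2n doubleK.
by rewrite big_mkcond sum_even // => u; case: ifP.
Qed.

Lemma path_color e (f : T -> bool) x p : (forall a b, e a b -> f a != f b) ->
  path e x p -> f (last x p) = f x (+) odd (size p).
Proof.
move=> hf; elim: p x => [|y p IH] x /=; first by rewrite addbF.
case/andP=> /hf fxy /IH ->; move: fxy.
by case: (f x); case: (f y); case: (odd (size p)).
Qed.

Lemma bipartite_cycle_even e p : bipartite e -> cycle e p -> ~~ odd (size p).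
Proof.
case=> f hf; case: p => [|x r] //=; rewrite rcons_path => /andP[/(path_color hf) fl /hf].
by rewrite fl; case: (f x); case: (odd (size r)).
Qed.

Lemma fixfree_involution_card_even (A : {set T}) (g : T -> T) :
  {in A, forall y, g y \in A} -> {in A, forall y, g y != y} -> {in A, involutive g} ->
  ~~ odd #|A|.
Proof.
move=> gA gfix gK; have [n] := ubnP #|A|.
elim: n A gA gfix gK => // n IH A gA gfix gK ltAn.
have [->|[y yA]] := set_0Vmem A; first by rewrite cards0.
have gyA : g y \in A :\ y by rewrite !inE gfix // gA.
have cardA : #|A| = (#|A :\ y :\ g y|).+2.
  by rewrite (cardsD1 y A) yA (cardsD1 (g y) (A :\ y)) gyA.
rewrite cardA /= negbK; apply: IH; last by move: ltAn; rewrite cardA; lia.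
- move=> z; rewrite !inE => /and3P[zgy zy zA]; rewrite gA // andbT.
  apply/andP; split; apply/eqP => hz.
  + by move: zy; rewrite -(gK _ zA) hz gK ?eqxx.
  + by move: zgy; rewrite -(gK _ zA) hz eqxx.
- by move=> z; rewrite !inE => /and3P[_ _ /gfix].
- by move=> z; rewrite !inE => /and3P[_ _ /gK].
Qed.
End Graphs.

(** * Forests *)

Section Forests.
Variables (T : finType) (e : rel T).
Hypotheses (se : symmetric e) (ie : irreflexive e).

Lemma path_last_nbr x q y : uniq (x :: q) -> path e x q -> y \in x :: q ->
  y != last x q -> e (last x q) y ->
  (exists p, is_cycle e p) \/ exists p1, q = rcons p1 (last x q) /\ last x p1 = y.
Proof.
move=> + + yq; case/splitPl: yq => p1 p2 hy uq hp hne hl.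
case: p2 hy hne hl uq hp => [|z [|w r]] hy hne hl uq hp.
- by move: hne; rewrite cats0 hy eqxx.
- by right; exists p1; rewrite cats1 last_rcons.
- left; exists [:: y, z, w & r]; split=> //.
  + move: uq; rewrite -cat_cons cat_uniq => /and3P[_ hh u2].
    rewrite cons_uniq u2 andbT; apply: contra hh => hin.
    by apply/hasP; exists y => //; rewrite -hy mem_last.
  + rewrite /cycle rcons_path; move: hp; rewrite cat_path hy => /andP[_ ->] /=.
    by move: hl; rewrite last_cat hy.
Qed.

Lemma min_deg2_cycle (S : {set T}) : S != set0 ->
  {in S, forall x, 1 < #|[set y in S | e x y]|} -> exists p, is_cycle e p.
Proof.
move=> /set0Pn[x0 x0S] hdeg.
suff long_paths j : (exists p, is_cycle e p) \/
    exists x q, [/\ j <= size q, uniq (x :: q), {subset x :: q <= S} & path e x q].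
  case: (long_paths #|S|) => [//|[x [q [hj uq qS _]]]].
  have /subset_leq_card : [set z in x :: q] \subset S by apply/subsetP => z; rewrite inE => /qS.
  by rewrite cardsE (card_uniqP uq) /= ltnNge hj.
elim: j => [|j [|[x [q [hj uq qS pq]]]]]; [|by left|].
  by right; exists x0, [::]; split=> // z; rewrite inE => /eqP->.
set z := last x q; have zS : z \in S by apply/qS/mem_last.
case: (pickP [pred y | [&& y \in S, e z y & y \notin x :: q]]) => [y /and3P[yS ezy yq]|hall].
  right; exists x, (rcons q y); split.
  - by rewrite size_rcons.
  - by rewrite -rcons_cons rcons_uniq yq uq.
  - by move=> w; rewrite -rcons_cons mem_rcons inE => /predU1P[->|/qS].
  - by rewrite rcons_path pq.
have pred_of y : y \in S -> e z y ->
    (exists p, is_cycle e p) \/ exists p1, q = rcons p1 z /\ last x p1 = y.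
  move=> yS ezy; apply: path_last_nbr => //.
  - by move: (hall y) => /= /negbT; rewrite yS ezy /= negbK.
  - by apply: contraTneq ezy => ->; rewrite ie.
case/card_gt1P: (hdeg z zS) => y1 [y2 []]; rewrite !inE => /andP[y1S e1] /andP[y2S e2].
case: (pred_of y1 y1S e1) => [|[p1 [q1 <-]]]; first by left.
case: (pred_of y2 y2S e2) => [|[p2 [q2 <-]]]; first by left.
have p12 : p1 = p2 by apply: (@rcons_injl _ z); rewrite -q1 -q2.
by rewrite p12 eqxx.
Qed.

Definition deg_in (S : {set T}) x := #|[set y in S | e x y]|.

Lemma deg_in_setD1 (S : {set T}) x u : x \in S ->
  deg_in S u = e u x + deg_in (S :\ x) u.
Proof.
move=> xS; rewrite /deg_in (cardsD1 x) !inE xS /=; congr (_ + _).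
by apply: eq_card => y; rewrite !inE andbA.
Qed.

Lemma sum_deg_in_setD1 (S : {set T}) x : x \in S ->
  \sum_(u in S) deg_in S u = 2 * deg_in S x + \sum_(u in S :\ x) deg_in (S :\ x) u.
Proof.
move=> xS; rewrite (bigD1 x) //= (eq_bigl [in S :\ x]) => [|u]; last by rewrite !inE andbC.
rewrite (eq_bigr _ (fun u _ => deg_in_setD1 u xS)) big_split /= addnA mul2n -addnn.
congr (_ + _ + _).
rewrite /deg_in -sum1_card big_mkcond [RHS]big_mkcond /=.
apply: eq_bigr => y _; rewrite !inE se.
by case: (eqVneq y x) => [->|_]; rewrite ?ie ?andbF //=; case: (y \in S); case: (e x y).
Qed.

Lemma acyclic_sum_deg_in (S : {set T}) : (forall p, ~ is_cycle e p) -> S != set0 ->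
  \sum_(u in S) deg_in S u + 2 <= 2 * #|S|.
Proof.
move=> acyc; have [n] := ubnP #|S|; elim: n S => // n IH S ltSn S0.
have [x /andP[xS degx]|deg2] := pickP [pred x in S | deg_in S x <= 1]; last first.
  have [u uS|p /acyc //] := min_deg2_cycle S0.
  by move: (deg2 u) => /=; rewrite uS /= => /negbT; rewrite -ltnNge.
rewrite (sum_deg_in_setD1 xS) (cardsD1 x S) xS.
have [S'0|[w wS']] := set_0Vmem (S :\ x).
  rewrite S'0 big_set0 cards0 addn0.
  suff -> : deg_in S x = 0 by [].
  apply/eqP; rewrite cards_eq0; apply/eqP/setP => y; rewrite !inE.
  case: (eqVneq y x) => [->|yx]; rewrite ?ie ?andbF //; apply/andP => -[yS _].
  by have := in_set0 y; rewrite -S'0 !inE yx yS.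
have S'0 : S :\ x != set0 by apply/set0Pn; exists w.
rewrite (cardsD1 x S) xS in ltSn; have := IH _ ltSn S'0; lia.
Qed.
End Forests.

(** * Necessity *)

Section CactusWithCycleEdges.
Variables (T : finType) (e : rel T).
Hypotheses (se : symmetric e) (ie : irreflexive e).
Hypothesis on_cycle :
  forall u v, e u v -> exists p, is_cycle e p /\ (u, v) \in cycle_edges p.
Hypothesis cycle_unique : forall u v p q, e u v -> is_cycle e p -> is_cycle e q ->
  (u, v) \in cycle_edges p -> (u, v) \in cycle_edges q -> cycle_edges p = cycle_edges q.

(* Some cycle through [uv]; by [cycle_unique] only its edge set matters. *)
Definition cycle_through (uv : T * T) : seq T :=
  epsilon (inhabits [::]) (fun p => is_cycle e p /\ uv \in cycle_edges p).

Lemma cycle_throughP u v :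
  e u v -> is_cycle e (cycle_through (u, v)) /\ (u, v) \in cycle_edges (cycle_through (u, v)).
Proof. by move=> /on_cycle; apply: epsilon_spec. Qed.

Lemma cycle_edges_through u v p : e u v -> is_cycle e p -> (u, v) \in cycle_edges p ->
  cycle_edges p = cycle_edges (cycle_through (u, v)).
Proof. by move=> euv cp uvp; have [cq uvq] := cycle_throughP euv; apply: cycle_unique uvq. Qed.

Lemma cactus_deg_even v : ~~ odd (deg e v).
Proof.
(* [g] pairs each neighbour [y] of [v] with the other neighbour of [v] on the cycle
   through [vy]; the uniqueness of that cycle makes [g] an involution. *)
pose N y := [set z | (v, z) \in cycle_edges (cycle_through (v, y))].
pose g y := other (N y) y.
have NP y : e v y -> N y = [set y; g y] /\ g y != y.
  move=> /cycle_throughP[[uc sc _] vy]; apply: other_card2; last by rewrite inE.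
  by rewrite card_cycle_nbrs //; case/andP: (cycle_edges_vertices vy) => ->.
have vg y : e v y -> (v, g y) \in cycle_edges (cycle_through (v, y)).
  move=> /NP[Ny _]; have : g y \in N y by rewrite Ny !inE eqxx orbT.
  by rewrite inE.
have evg y : e v y -> e v (g y).
  by move=> evy; have [[_ _ cc] _] := cycle_throughP evy; apply: cycle_edges_edge (vg y evy).
apply: (@fixfree_involution_card_even _ _ g) => y; rewrite inE => evy.
- by rewrite inE evg.
- by have [] := NP y evy.
have Ng : N (g y) = N y.
  have [cc _] := cycle_throughP evy.
  by rewrite /N -(cycle_edges_through (evg y evy) cc (vg y evy)).
have [Ny gy] := NP y evy.
transitivity (other (N y) (g y)); first by rewrite {1}/g Ng.
by rewrite Ny setUC other_set2 // eq_sym.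
Qed.

Definition cycle_classes := [set cycle_edges (cycle_through uv) | uv in edge_set e].

Lemma cycle_classesP C : C \in cycle_classes -> exists2 p, is_cycle e p & C = cycle_edges p.
Proof.
by case/imsetP=> -[u v]; rewrite inE => /cycle_throughP[cp _] ->; exists (cycle_through (u, v)).
Qed.

Lemma trivIset_cycle_classes : trivIset cycle_classes.
Proof.
apply/trivIsetP => _ _ /cycle_classesP[p cp ->] /cycle_classesP[q cq ->] pq.
rewrite -setI_eq0; apply: contraNT pq => /set0Pn[[a b]]; rewrite inE => /andP[abp abq].
have [_ _ /(cycle_edges_edge se)/(_ abp) eab] := cp.
by apply/eqP; apply: cycle_unique abp abq.
Qed.

(* Removing one arc of each class breaks every cycle, as a cycle is its own class. *)
Lemma feedback_edge_set (x0 : T) : exists R : {set T * T}, #|R| <= #|cycle_classes| /\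
  forall p, ~ is_cycle (remove_edges e R) p.
Proof.
pose rep (C : {set T * T}) := odflt (x0, x0) [pick z in C].
exists [set rep C | C in cycle_classes]; split=> [|p [up sp cp]]; first exact: leq_imset_card.
have [u pu] : exists u, u \in p by case: (p) sp => [|u ?] //; exists u; rewrite mem_head.
have cpe : cycle e p by apply: sub_cycle cp => x y /and3P[].
have up_next : (u, next p u) \in cycle_edges p by rewrite mem_cycle_edges // pu eqxx.
have pK : cycle_edges p \in cycle_classes.
  have eu := cycle_edges_edge se cpe up_next.
  by rewrite (cycle_edges_through eu (And3 up sp cpe) up_next) imset_f // inE.
have : rep (cycle_edges p) \in cycle_edges p.
  by rewrite /rep; case: pickP => [//|/(_ (u, next p u)) /=]; rewrite up_next.
case def_ab: (rep _) => [a b] abp.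
have /and3P[_ /negP[]] := cycle_edges_edge (remove_edges_sym _ se) cp abp.
by rewrite -def_ab imset_f.
Qed.

Section Girth4.
Hypothesis girth4 : forall p, is_cycle e p -> 3 < size p.

Lemma card_cycle_classes : 8 * #|cycle_classes| <= #|edge_set e|.
Proof.
rewrite mulnC -sum_nat_const (@leq_trans (\sum_(C in cycle_classes) #|C|)) //.
  apply: leq_sum => _ /cycle_classesP[p cp ->]; have := girth4 cp.
  by case: cp => up sp _; rewrite card_cycle_edges //; lia.
have <- : #|cover cycle_classes| = \sum_(C in cycle_classes) #|C|.
  by apply/eqP; rewrite (leq_card_cover _).2 trivIset_cycle_classes.
apply/subset_leq_card/subsetP => -[a b] /bigcupP[_ /cycle_classesP[p [_ _ cp] ->] abp].
by rewrite inE; apply: cycle_edges_edge se cp abp.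
Qed.

Lemma cactus_edge_bound : 0 < #|T| -> 3 * \sum_u deg e u <= 8 * (#|T| - 1).
Proof.
case/card_gt0P=> x0 _; have [R [RK acyc]] := feedback_edge_set x0.
set E' := edge_set (remove_edges e R).
have forest_bound : #|E'| + 2 <= 2 * #|T|.
  have T0 : [set: T] != set0 by apply/set0Pn; exists x0.
  have := acyclic_sum_deg_in (remove_edges_sym R se) (remove_edges_irr R ie) acyc T0.
  rewrite cardsT card_edge_set; congr (_ + _ <= _).
  by apply: eq_big => [u|u _]; rewrite ?inE //; apply: eq_card => y; rewrite !inE.
have sum_bound : \sum_u deg e u <= #|E'| + 2 * #|cycle_classes|.
  set RC := [set (uv.2, uv.1) | uv in R].
  have sub_e : edge_set e \subset E' :|: (R :|: RC).
    apply/subsetP => -[x y]; rewrite !inE /remove_edges /= => ->.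
    case: (boolP ((x, y) \in R)) => //= _; case: (boolP ((y, x) \in R)) => //= yxR.
    by apply/imsetP; exists (y, x).
  rewrite -card_edge_set (leq_trans (subset_leq_card sub_e)) //.
  rewrite (leq_trans (leq_card_setU _ _).1) // leq_add2l mul2n -addnn.
  rewrite (leq_trans (leq_card_setU _ _).1) // leq_add //.
  exact: leq_trans (leq_imset_card _ _) RK.
have := card_cycle_classes; rewrite card_edge_set; lia.
Qed.
End Girth4.
End CactusWithCycleEdges.

Lemma bipartite_bridgeless_cactus_deg (T : finType) (e : rel T) :
  simple_graph e -> is_cactus e -> bridgeless e -> bipartite e -> 0 < #|T| ->
  [/\ forall v, ~~ odd (deg e v), ~~ odd (\sum_u deg e u)./2
    & 3 * \sum_u deg e u <= 8 * (#|T| - 1)].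
Proof.
move=> [se ie] [_ cactus] bridgeless_e bip T0.
have on_cycle u v : e u v -> exists p, is_cycle e p /\ (u, v) \in cycle_edges p.
  by move=> euv; apply: connect_remove_edge_cycle => //; apply: bridgeless_e.
have girth4 p : is_cycle e p -> 3 < size p.
  by case=> _ sp /(bipartite_cycle_even bip); case: (size p) sp => [|[|[|[]]]].
have even_deg := cactus_deg_even se on_cycle cactus.
split=> //; first exact: bipartite_half_sum_deg_even.
exact: cactus_edge_bound.
Qed.

(** * Sufficiency *)

Section BipCactusOn.
Variable T : finType.

Definition erel (E : {set T * T}) : rel T := fun x y => (x, y) \in E.

Record bip_cactus_on (E : {set T * T}) (S : {set T}) : Prop := {
  bc_sym : forall x y, ((x, y) \in E) = ((y, x) \in E);
  bc_irr : forall x, (x, x) \notin E;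
  bc_supp : forall x y, (x, y) \in E -> x \in S;
  bc_conn : {in S &, forall x y, connect (erel E) x y};
  bc_on_cycle : forall x y, (x, y) \in E ->
    exists p, is_cycle (erel E) p /\ (x, y) \in cycle_edges p;
  bc_cycle_unique : forall u v p q, (u, v) \in E ->
    is_cycle (erel E) p -> is_cycle (erel E) q ->
    (u, v) \in cycle_edges p -> (u, v) \in cycle_edges q -> cycle_edges p = cycle_edges q;
  bc_bipartite : bipartite (erel E) }.

Lemma bip_cactus_on1 a : bip_cactus_on set0 [set a].
Proof.
split; rewrite /erel; try by move=> x y; rewrite !inE.
- by move=> x; rewrite inE.
- by move=> x y; rewrite !inE => /eqP-> /eqP->; apply: connect0.
- by exists xpredT => x y; rewrite inE.
Qed.

Lemma deg_out E S v : bip_cactus_on E S -> v \notin S -> deg (erel E) v = 0.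
Proof.
move=> hE vS; apply/eqP; rewrite cards_eq0; apply/eqP/setP => y; rewrite !inE.
by apply: contraNF vS => /(bc_supp hE).
Qed.

Lemma bip_cactus_on_setT E : bip_cactus_on E [set: T] ->
  [/\ simple_graph (erel E), is_cactus (erel E), bridgeless (erel E) & bipartite (erel E)].
Proof.
move=> hE; have se : symmetric (erel E) by move=> x y; exact: (bc_sym hE x y).
have conn : connected_graph (erel E) by move=> x y; apply: (bc_conn hE); rewrite inE.
split=> //; last exact: bc_bipartite hE.
- by split=> // x; apply/negbTE/(bc_irr hE).
- by split=> //; apply: (bc_cycle_unique hE).
- by apply: bridgeless_of_cycles => // x y; apply: (bc_on_cycle hE).
Qed.
End BipCactusOn.

Section AttachCycle.
Variables (T : finType) (E : {set T * T}) (S : {set T}) (a : T) (xs : seq T).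
Hypotheses (hE : bip_cactus_on E S) (aS : a \in S) (uxs : uniq xs).
Hypotheses (xsS : {in xs, forall x, x \notin S}) (oxs : odd (size xs)) (sxs : 1 < size xs).

Local Notation c := (a :: xs).
Local Notation E2 := (E :|: cycle_edges (a :: xs)).

Let axs : a \notin xs.
Proof. by apply: contraL aS => /xsS. Qed.

Let uc : uniq c.
Proof. by rewrite /= axs. Qed.

Let sc : 2 < size c.
Proof. by []. Qed.

Let edge_S x y : (x, y) \in E -> (x \in S) && (y \in S).
Proof. by move=> xy; rewrite (bc_supp hE xy) (bc_supp hE (y := x)) // -(bc_sym hE). Qed.

Let c_meet_S z : z \in c -> z \in S -> z = a.
Proof. by rewrite inE => /predU1P[//|/xsS/negP]. Qed.

Let E_cycle_disjoint x y : (x, y) \in E -> (x, y) \notin cycle_edges c.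
Proof.
move=> xy; apply/negP => /cycle_edges_vertices/andP[xc yc].
case/andP: (edge_S xy) => /(c_meet_S xc) ex /(c_meet_S yc) ey.
by move: xy; rewrite ex ey (negbTE (bc_irr hE a)).
Qed.

Let E2_xs y z : y \in xs -> ((y, z) \in E2) = ((y, z) \in cycle_edges c).
Proof.
move=> yxs; rewrite in_setU orb_idl // => /edge_S/andP[yS _].
by move: (xsS yxs); rewrite yS.
Qed.

Let E2_sym x y : ((x, y) \in E2) = ((y, x) \in E2).
Proof. by rewrite !in_setU (bc_sym hE) cycle_edges_sym. Qed.

(* The vertices of [xs] have all their neighbours on [c], so a cycle through one of
   them follows [c] in both directions and contains it. *)
Lemma attached_cycle p : is_cycle (erel E2) p -> (exists2 x, x \in p & x \in xs) ->
  cycle_edges p = cycle_edges c.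
Proof.
case=> up sp cp [x xp xxs].
have nbrs y : y \in xs -> y \in p -> [set next p y; prev p y] = [set next c y; prev c y].
  move=> yxs yp; apply: eq_set2; first exact: next_neq_prev.
    have : (y, next p y) \in cycle_edges c by rewrite -E2_xs //; apply: next_cycle cp yp.
    by rewrite mem_cycle_edges // !inE => /andP[_].
  have : (y, prev p y) \in cycle_edges c by rewrite -E2_xs // E2_sym; apply: prev_cycle cp yp.
  by rewrite mem_cycle_edges // !inE => /andP[_].
have nbrs_in y z : y \in xs -> y \in p -> z \in [set next c y; prev c y] -> z \in p.
  by move=> yxs yp; rewrite -nbrs // !inE => /orP[] /eqP->; rewrite ?mem_next ?mem_prev.
have xs_p : {subset xs <= p}.
  have := cycle_next uc; rewrite /= rcons_path => /andP[+ _].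
  case def_xs: xs xxs => [//|x1 xs'] x1xs /= /andP[_ pxs].
  have inv := path_invariant (A := fun z => z \in p) pxs.
  have {}inv : {in x1 :: xs', forall z, (z \in p) = (x1 \in p)}.
    apply: inv => y z; rewrite -def_xs => yxs zxs /eqP nyz; subst z.
    apply/idP/idP => [yp|np]; first by apply: (nbrs_in _ _ yxs yp); rewrite !inE eqxx.
    by apply: (nbrs_in _ _ zxs np); rewrite prev_next // !inE eqxx orbT.
  by move=> z zxs; rewrite inv // -(inv x) // -def_xs.
have c_p : {subset c <= p}.
  move=> z; rewrite inE => /predU1P[->|/xs_p //].
  have nxs : next c a \in xs by rewrite next_head; case: (xs) sxs => // ? ?; rewrite mem_head.
  by apply: nbrs_in nxs (xs_p _ nxs) _; rewrite prev_next // !inE eqxx orbT.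
have xs_edge u v : u \in xs -> (u, v) \in cycle_edges c -> (u, v) \in cycle_edges p.
  move=> uxs'; rewrite !mem_cycle_edges // (xs_p _ uxs') => /andP[_].
  by rewrite -!in_set2 nbrs // xs_p.
apply: cycle_edges_sub_eq => // -[u v] uv; have /andP[uc' vc] := cycle_edges_vertices uv.
move: uc'; rewrite inE => /predU1P[eua|uxs']; last exact: xs_edge uxs' uv.
move: vc; rewrite inE => /predU1P[eva|vxs].
  by move: uv; rewrite eua eva (negbTE (cycle_edges_irr _ uc (ltnW sc))).
by rewrite cycle_edges_sym; apply: xs_edge; rewrite // cycle_edges_sym.
Qed.

Lemma unattached_cycle p : is_cycle (erel E2) p -> ~~ has (mem xs) p -> is_cycle (erel E) p.
Proof.
case=> up sp cp /hasPn pxs; split=> //.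
apply: (sub_in_cycle (P := [predC xs])) cp; last exact/allP.
move=> x y xxs yxs; rewrite /erel in_setU => /orP[//|xyc].
have /andP[] := cycle_edges_vertices xyc; rewrite !inE (negbTE xxs) (negbTE yxs) !orbF.
by move=> /eqP ex /eqP ey; move: xyc; rewrite ex ey (negbTE (cycle_edges_irr _ uc (ltnW sc))).
Qed.

Lemma attach_cycle_unique u v p q : (u, v) \in E2 ->
  is_cycle (erel E2) p -> is_cycle (erel E2) q ->
  (u, v) \in cycle_edges p -> (u, v) \in cycle_edges q -> cycle_edges p = cycle_edges q.
Proof.
move=> _ cp cq uvp uvq.
have attached r : is_cycle (erel E2) r -> has (mem xs) r -> cycle_edges r = cycle_edges c.
  by move=> cr /hasP; apply: attached_cycle.
have unattached r : is_cycle (erel E2) r -> ~~ has (mem xs) r -> (u, v) \in cycle_edges r ->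
    is_cycle (erel E) r /\ (u, v) \in E.
  move=> cr /(unattached_cycle cr) cr' uvr; split=> //.
  by case: cr' => _ _ /(cycle_edges_edge (bc_sym hE))/(_ uvr).
have not_both r r' : is_cycle (erel E2) r -> is_cycle (erel E2) r' -> has (mem xs) r ->
    ~~ has (mem xs) r' -> (u, v) \in cycle_edges r -> (u, v) \in cycle_edges r' -> False.
  move=> cr cr' hr hr' uvr uvr'; have [_ /E_cycle_disjoint] := unattached r' cr' hr' uvr'.
  by rewrite -(attached r) ?uvr.
case: (boolP (has (mem xs) p)) => hp; case: (boolP (has (mem xs) q)) => hq.
- by rewrite !attached.
- by case: (not_both p q).
- by case: (not_both q p).
- have [cp' uvE] := unattached p cp hp uvp; have [cq' _] := unattached q cq hq uvq.
  exact: (bc_cycle_unique hE uvE cp' cq').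
Qed.

Lemma attach_bipartite : bipartite (erel E2).
Proof.
have [f hf] := bc_bipartite hE.
(* [c] has even length, so index parity along [c] is a proper colouring of it. *)
pose F y := if y \in c then f a (+) odd (index y c) else f y.
have F_S y : y \in S -> F y = f y.
  by move=> yS; rewrite /F; case: ifP => // yc; rewrite (c_meet_S yc yS) /= eqxx addbF.
have F_next z : z \in c -> F (next c z) != F z.
  move=> zc; rewrite /F mem_next zc index_next // odd_mod /=; last by rewrite oxs.
  by case: (f a); case: (odd _).
exists F => x y; rewrite /erel in_setU => /orP[xy|].
  by case/andP: (edge_S xy) => xS yS; rewrite !F_S //; apply: hf.
rewrite inE /= => /andP[/andP[xc yc] /orP[]/eqP<-].
- by rewrite eq_sym F_next.
- exact: F_next.
Qed.

Lemma attach_bip_cactus : bip_cactus_on E2 (S :|: [set x in xs]).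
Proof.
have cc : cycle (erel E2) c.
  by apply: sub_cycle (cycle_cycle_edges uc) => x y; rewrite /erel in_setU orbC => ->.
split.
- exact: E2_sym.
- by move=> x; rewrite in_setU negb_or (bc_irr hE) cycle_edges_irr // ltnW.
- move=> x y; rewrite !in_setU => /orP[/(bc_supp hE)->//|/cycle_edges_vertices/andP[]].
  by rewrite inE => /orP[/eqP->|xxs] _; apply/orP; [left | right].
- suff conn_a z : z \in S :|: [set x in xs] -> connect (erel E2) a z.
    move=> x y /conn_a ax /conn_a ay; apply: connect_trans ay.
    by rewrite (sym_connect_sym E2_sym).
  rewrite in_setU inE => /orP[zS|zxs].
    apply: connect_sub (bc_conn hE aS zS) => x y xy.
    by apply/connect1/setUP; left.
  move: cc; rewrite /cycle rcons_path => /andP[/path_connect pc _].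
  by apply: pc; rewrite inE; apply/orP; right.
- move=> x y; rewrite in_setU => /orP[xy|xyc]; last by exists c.
  have [p [[up sp cp] xyp]] := bc_on_cycle hE xy; exists p; split=> //; split=> //.
  by apply: sub_cycle cp => u w; rewrite /erel in_setU => ->.
- exact: attach_cycle_unique.
- exact: attach_bipartite.
Qed.

Lemma attach_deg v : deg (erel E2) v = deg (erel E) v + (if v \in c then 2 else 0).
Proof.
rewrite /deg -(card_cycle_nbrs v uc sc).
have -> : [set y | erel E2 v y] = [set y | (v, y) \in E] :|: [set y | (v, y) \in cycle_edges c].
  by apply/setP => y; rewrite /erel !inE.
rewrite cardsU (_ : _ :&: _ = set0) ?cards0 ?subn0 //.
apply/setP => y; rewrite in_set0 in_setI in_set; apply/negP => /andP[/E_cycle_disjoint/negP].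
by rewrite in_set.
Qed.

Lemma attach_cycle (s : T -> nat) : {in S, forall v, deg (erel E) v = 2 * s v} ->
  bip_cactus_on E2 (S :|: [set x in xs]) /\ {in S :|: [set x in xs], forall v,
    deg (erel E2) v = 2 * (if v \in xs then 1 else s v + (v == a))}.
Proof.
move=> degE; split=> [|v]; first exact: attach_bip_cactus.
rewrite in_setU inE attach_deg inE.
case: (boolP (v \in xs)) => [vxs _|_]; first by rewrite (deg_out hE (xsS vxs)) orbT.
by rewrite !orbF => /degE->; rewrite mulnDr; case: eqP.
Qed.
End AttachCycle.

Section Construction.
Variable T : finType.
Implicit Types (S : {set T}) (s : T -> nat).

Lemma bip_cactus_cycle S : ~~ odd #|S| -> 3 < #|S| ->
  exists E, bip_cactus_on E S /\ {in S, forall v, deg (erel E) v = 2}.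
Proof.
move=> evS S4; have /card_gt0P[a aS] : 0 < #|S| by lia.
set xs := enum (S :\ a).
have sxs : size xs = #|S|.-1 by rewrite -cardE (cardsD1 a S) aS.
have xsS : {in xs, forall x, x \notin [set a]} by move=> x; rewrite mem_enum !inE => /andP[].
have oxs : odd (size xs) by rewrite sxs; case: #|S| evS S4 => //= n; rewrite negbK.
have sxs1 : 1 < size xs by rewrite sxs; lia.
have S_xs : [set a] :|: [set x in xs] = S.
  by apply/setP => v; rewrite !inE mem_enum !inE; case: eqP => [->|].
have deg0 : {in [set a], forall v, deg (erel set0) v = 2 * 0}.
  by move=> v _; apply/eqP; rewrite muln0 cards_eq0; apply/eqP/setP => y; rewrite !inE /erel inE.
have [hE degE] := attach_cycle (bip_cactus_on1 a) (set11 a) (enum_uniq _) xsS oxs sxs1 deg0.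
rewrite S_xs in hE degE; exists (set0 :|: cycle_edges (a :: xs)); split=> // v vS.
rewrite degE //; case: ifP => // /negbT; rewrite mem_enum !inE vS andbT negbK => /eqP->.
by rewrite eqxx.
Qed.

Lemma three_weight_one S s a : {in S, forall v, 0 < s v} ->
  3 * \sum_(v in S) s v + 4 <= 4 * #|S| -> a \in S -> 1 < s a ->
  3 <= #|[set v in S | s v == 1]|.
Proof.
move=> s_pos bd aS sa; set U := [set v in S | s v == 1].
have U_S : #|U| < #|S|.
  apply/proper_card/properP; split; first by apply/subsetP => v; rewrite inE => /andP[].
  by exists a; rewrite // inE aS /=; case: (s a) sa => [|[]].
have sum_U : 2 * #|S| <= \sum_(v in S) s v + #|U|.
  have -> : #|U| = \sum_(v in S) (s v == 1).
    rewrite -sum1_card big_mkcond [RHS]big_mkcond /=; apply: eq_bigr => v _.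
    by rewrite inE; case: (v \in S); case: (s v == 1).
  rewrite -big_split mulnC -sum_nat_const /=; apply: leq_sum => v /s_pos.
  by case: (s v) => [|[]].
lia.
Qed.

Section Step.
Variables (S : {set T}) (s : T -> nat) (a : T) (xs : seq T).
Hypotheses (aS : a \in S) (sa : 1 < s a) (uxs : uniq xs) (sxs : size xs = 3).
Hypothesis xs1 : {subset xs <= [set v in S | s v == 1]}.

Local Notation S' := (S :\: [set x in xs]).
Local Notation s' := (fun v => if v == a then (s a).-1 else s v).

Let axs : a \notin xs.
Proof. by apply: contraL sa => /xs1; rewrite inE => /andP[_ /eqP->]. Qed.

Lemma step_center : a \in S'.
Proof. by rewrite !inE axs aS. Qed.

Let xsS : [set x in xs] \subset S.
Proof. by apply/subsetP => x; rewrite inE => /xs1; rewrite inE => /andP[]. Qed.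

Lemma card_step : #|S'| + 3 = #|S|.
Proof.
have cX : #|[set x in xs]| = 3 by rewrite cardsE (card_uniqP uxs).
by rewrite cardsD (setIidPr xsS) cX subnK // -cX subset_leq_card.
Qed.

Lemma sum_step : \sum_(v in S') s' v + 4 = \sum_(v in S) s v.
Proof.
have aS' := step_center.
rewrite [RHS](big_setID [set x in xs]) /= (setIidPr xsS).
have -> : \sum_(v in [set x in xs]) s v = 3.
  rewrite -sxs -(card_uniqP uxs) -cardsE -sum1_card; apply: eq_bigr => v.
  by rewrite inE => /xs1; rewrite inE => /andP[_ /eqP].
rewrite (bigD1 a aS') [X in _ = _ + X](bigD1 a aS') /= eqxx.
rewrite (eq_bigr s) => [|v /andP[_ /negbTE->] //]; move: sa; case: (s a) => // k _ /=; lia.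
Qed.

Lemma bip_cactus_step E : bip_cactus_on E S' -> {in S', forall v, deg (erel E) v = 2 * s' v} ->
  exists E, bip_cactus_on E S /\ {in S, forall v, deg (erel E) v = 2 * s v}.
Proof.
move=> hE degE.
have xsS' : {in xs, forall x, x \notin S'} by move=> x xxs; rewrite !inE xxs.
have [||hE2 degE2] := attach_cycle hE step_center uxs xsS' _ _ degE; rewrite ?sxs //.
have S_xs : S' :|: [set x in xs] = S by rewrite setUC -{1}(setIidPr xsS) setID.
rewrite S_xs in hE2 degE2; exists (E :|: cycle_edges (a :: xs)); split=> // v vS.
rewrite degE2 //; case: ifP => [/xs1|_]; first by rewrite inE => /andP[_ /eqP->].
by case: eqP => [->|_]; rewrite ?addn0 // addn1 prednK // ltnW.
Qed.
End Step.

Lemma bip_cactus_of_weights S s : S != set0 -> {in S, forall v, 0 < s v} ->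
  ~~ odd (\sum_(v in S) s v) -> 3 * \sum_(v in S) s v + 4 <= 4 * #|S| ->
  exists E, bip_cactus_on E S /\ {in S, forall v, deg (erel E) v = 2 * s v}.
Proof.
have [m] := ubnP (\sum_(v in S) s v); elim: m S s => // m IH S s lt_sum S0 s_pos ev bd.
have [a /andP[aS sa]|ones] := pickP [pred v in S | 1 < s v]; last first.
  have s1 : {in S, forall v, s v = 1}.
    by move=> v vS; move: (ones v) (s_pos v vS); rewrite /= vS; case: (s v) => [|[]].
  have sumS : \sum_(v in S) s v = #|S| by rewrite -sum1_card; apply: eq_bigr.
  have [||E [hE degE]] := bip_cactus_cycle (S := S); rewrite -?sumS //; first lia.
  by exists E; split=> // v vS; rewrite degE // s1.
set xs := take 3 (enum [set v in S | s v == 1]).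
have sxs : size xs = 3 by rewrite size_takel // -cardE (three_weight_one s_pos bd aS sa).
have uxs : uniq xs by rewrite take_uniq ?enum_uniq.
have xs1 : {subset xs <= [set v in S | s v == 1]} by move=> x /mem_take; rewrite mem_enum.
have sum' := sum_step aS sa uxs sxs xs1; have card' := card_step uxs sxs xs1.
have [|||||E [hE degE]] :=
  IH (S :\: [set x in xs]) (fun v => if v == a then (s a).-1 else s v).
- by move: lt_sum; rewrite -sum'; lia.
- by apply/set0Pn; exists a; apply: step_center xs1.
- by move=> v; rewrite !inE => /andP[_ vS]; case: eqP => _; [lia | apply: s_pos].
- by move: ev; rewrite -sum' oddD addbF.
- by move: bd; rewrite -sum' -card'; lia.
- by apply: (bip_cactus_step aS sa uxs sxs xs1 hE).
Qed.
End Construction.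

Lemma even_half_bound M n : ~~ odd M -> ~~ odd M./2 -> 3 * M <= 8 * (n - 1) ->
  M./2 <= 2 * ((2 * (n - 1)) %/ 3).
Proof.
move=> eM eH; have hM := odd_double_half M; have hH := odd_double_half M./2.
by rewrite (negbTE eM) (negbTE eH) !add0n -!mul2n in hM hH; lia.
Qed.

Theorem theorem5p5 (n : nat) (d : 'I_n -> nat) :
  4 <= n -> degree_sequence d ->
  (exists e : rel 'I_n,
     [/\ realization d e, is_cactus e, bridgeless e & bipartite e]) <->
  [/\ (\sum_(i < n) d i)./2 <= 2 * ((2 * (n - 1)) %/ 3),
      ~~ odd ((\sum_(i < n) d i)./2)
    & forall i, ~~ odd (d i)].
Proof.
move=> n4 [d_range _ _]; split.
- case=> e [[simple deg_d] cactus bridgeless_e bip].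
  have sum_d : \sum_(i < n) d i = \sum_u deg e u by apply: eq_bigr => i _; rewrite deg_d.
  have [|even_deg half_even] := bipartite_bridgeless_cactus_deg simple cactus bridgeless_e bip.
    by rewrite card_ord; lia.
  rewrite card_ord sum_d => bound; split=> [|//|i]; last by rewrite -deg_d.
  exact: even_half_bound (sum_even even_deg) half_even bound.
- case=> bound even_half even_d; pose s v := (d v)./2.
  have d_s v : d v = 2 * s v by rewrite mul2n -[d v]odd_double_half (negbTE (even_d v)).
  have sum_s : \sum_(v in [set: 'I_n]) s v = (\sum_(i < n) d i)./2.
    by rewrite half_sum_even //; apply: eq_bigl => v; rewrite inE.
  have [||||E [hE degE]] := @bip_cactus_of_weights _ [set: 'I_n] s.
  - by apply/set0Pn; exists (Ordinal (leq_trans (isT : 0 < 4) n4)).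
  - by move=> v _; have := d_range v; rewrite d_s; lia.
  - by rewrite sum_s.
  - by rewrite sum_s cardsT card_ord; lia.
  have [simple cactus bridgeless_E bip] := bip_cactus_on_setT hE.
  by exists (erel E); split=> //; split=> // v; rewrite degE ?inE -?d_s.
Qed.
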